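(* Let $\mathcal A$ be an abelian category and let $0\to F\xrightarrow{i} M\xrightarrow{d} C\to 0$ be a fully invariant short exact sequence in $\mathcal A$. (1) The following are equivalent: (i) $M$ is (strongly) self-$F$-split and, for every morphism $g:M\to M$ with pullback square $P\xrightarrow{j}M$, $P\xrightarrow{f}F$ of $i$ along $g$ (so $gj=if$), the unique morphism $l:\mathrm{Ker}(g)\to P$ with $jl=\ker(g)$ is a (fully invariant) section; (ii) $M$ is (strongly) self-Rickart and $M\cong F\oplus C$. (2) The following are equivalent: (i) $M$ is dual (strongly) self-$F$-split and, for every morphism $g:M\to M$ with pushout square $M\xrightarrow{p}Q$, $C\xrightarrow{h}Q$ of $d$ along $g$ (so $pg=hd$), the unique morphism $q:Q\to \mathrm{Coker}(g)$ with $qp=\mathrm{coker}(g)$ is a (fully coinvariant) retraction; (ii) $M$ is dual (strongly) self-Rickart and $M\cong F\oplus C$.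
   Context: Convention: each statement containing parenthetical words holds in two versions: one obtained by deleting all parenthetical words and one obtained by keeping all of them. Let $\mathcal A$ be an abelian category. A morphism $s:X\to Y$ is a section if $ts=1_X$ for some $t$, and a retraction if $st=1_Y$ for some $t$. A monomorphism $i:K\to M$ is fully invariant if for every morphism $h:M\to M$ there is $\alpha:K\to K$ with $hi=i\alpha$; an epimorphism $d:M\to C$ is fully coinvariant if for every $h:M\to M$ there is $\beta:C\to C$ with $dh=\beta d$. A short exact sequence $0\to F\xrightarrow{i}M\xrightarrow{d}C\to 0$ is fully invariant if $i$ is fully invariant. $M$ is (strongly) self-$F$-split if for every morphism $g:M\to M$, the morphism $j:P\to M$ in the pullback of $i$ along $g$ (equivalently $\ker(dg)$) is a (fully invariant) section; $M$ is dual (strongly) self-$F$-split if for every $g:M\to M$, the morphism $p:M\to Q$ in the pushout of $d$ along $g$ (equivalently $\mathrm{coker}(gi)$) is a (fully coinvariant) retraction. $M$ is (strongly) self-Rickart if for every $f:M\to M$, $\ker(f)$ is a (fully invariant) section, and dual (strongly) self-Rickart if for every $f:M\to M$, $\mathrm{coker}(f)$ is a (fully coinvariant) retraction. *)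

From HB Require Import structures.
From mathcomp Require Import all_boot all_algebra.
Set Implicit Arguments. Unset Strict Implicit. Unset Printing Implicit Defensive.
Import GRing.Theory.
Local Open Scope ring_scope.

Record preadditive := {
  Obj : Type;
  Mor : Obj -> Obj -> zmodType;
  cmp : forall X Y Z : Obj, Mor Y Z -> Mor X Y -> Mor X Z;
  idm : forall X : Obj, Mor X X;
  comp_assoc : forall X Y Z W (h : Mor Z W) (g : Mor Y Z) (f : Mor X Y),
      cmp h (cmp g f) = cmp (cmp h g) f;
  comp_idl : forall X Y (f : Mor X Y), cmp (idm Y) f = f;
  comp_idr : forall X Y (f : Mor X Y), cmp f (idm X) = f;
  comp_addl : forall X Y Z (g g' : Mor Y Z) (f : Mor X Y),
      cmp (g + g') f = cmp g f + cmp g' f;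
  comp_addr : forall X Y Z (g : Mor Y Z) (f f' : Mor X Y),
      cmp g (f + f') = cmp g f + cmp g f'
}.

Arguments Mor {p}.
Arguments cmp {p X Y Z}.
Arguments idm {p}.

Section Defs.
Variable A : preadditive.
Local Notation "g \oc f" := (cmp g f) (at level 40, left associativity).

Definition monic (X Y : Obj A) (m : Mor X Y) :=
  forall Z (x y : Mor Z X), m \oc x = m \oc y -> x = y.
Definition epic (X Y : Obj A) (e : Mor X Y) :=
  forall Z (x y : Mor Y Z), x \oc e = y \oc e -> x = y.

Definition is_section (X Y : Obj A) (s : Mor X Y) :=
  exists t : Mor Y X, t \oc s = idm X.
Definition is_retraction (X Y : Obj A) (s : Mor X Y) :=
  exists t : Mor Y X, s \oc t = idm Y.

Definition is_iso (X Y : Obj A) (u : Mor X Y) :=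
  exists v : Mor Y X, v \oc u = idm X /\ u \oc v = idm Y.
Definition isomorphic (X Y : Obj A) := exists u : Mor X Y, is_iso u.

Definition fully_invariant (K M : Obj A) (i : Mor K M) :=
  monic i /\ forall h : Mor M M, exists alpha : Mor K K, h \oc i = i \oc alpha.
Definition fully_coinvariant (M C : Obj A) (d : Mor M C) :=
  epic d /\ forall h : Mor M M, exists beta : Mor C C, d \oc h = beta \oc d.

(* "(fully invariant) section" / "(fully coinvariant) retraction":
   strong = false deletes the parenthetical words, strong = true keeps them *)
Definition section_s (strong : bool) (X Y : Obj A) (s : Mor X Y) :=
  is_section s /\ (strong -> fully_invariant s).
Definition retraction_s (strong : bool) (X Y : Obj A) (s : Mor X Y) :=
  is_retraction s /\ (strong -> fully_coinvariant s).

Definition is_kernel (X Y : Obj A) (f : Mor X Y) (K : Obj A) (k : Mor K X) :=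
  f \oc k = 0 /\
  forall Z (x : Mor Z X), f \oc x = 0 -> exists! y : Mor Z K, k \oc y = x.
Definition is_cokernel (X Y : Obj A) (f : Mor X Y) (C : Obj A) (c : Mor Y C) :=
  c \oc f = 0 /\
  forall Z (x : Mor Y Z), x \oc f = 0 -> exists! y : Mor C Z, y \oc c = x.

Definition is_pullback (F N M : Obj A) (i : Mor F M) (g : Mor N M)
    (P : Obj A) (j : Mor P N) (f : Mor P F) :=
  g \oc j = i \oc f /\
  forall Z (x : Mor Z N) (y : Mor Z F), g \oc x = i \oc y ->
    exists! u : Mor Z P, j \oc u = x /\ f \oc u = y.
Definition is_pushout (M C N : Obj A) (d : Mor M C) (g : Mor M N)
    (Q : Obj A) (p : Mor N Q) (h : Mor C Q) :=
  p \oc g = h \oc d /\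
  forall Z (x : Mor N Z) (y : Mor C Z), x \oc g = y \oc d ->
    exists! u : Mor Q Z, u \oc p = x /\ u \oc h = y.

Definition is_biproduct (X Y B : Obj A) (p1 : Mor B X) (p2 : Mor B Y)
    (i1 : Mor X B) (i2 : Mor Y B) :=
  [/\ p1 \oc i1 = idm X, p2 \oc i2 = idm Y, p1 \oc i2 = 0, p2 \oc i1 = 0
    & i1 \oc p1 + i2 \oc p2 = idm B].

Definition iso_biproduct (M X Y : Obj A) :=
  exists (B : Obj A) (p1 : Mor B X) (p2 : Mor B Y) (i1 : Mor X B) (i2 : Mor Y B),
    is_biproduct p1 p2 i1 i2 /\ isomorphic M B.

Definition is_zero_object (Z : Obj A) :=
  (forall X (f g : Mor Z X), f = g) /\ (forall X (f g : Mor X Z), f = g).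

Definition abelian :=
  (exists Z : Obj A, is_zero_object Z) /\
  [/\ forall X Y : Obj A, exists B (p1 : Mor B X) (p2 : Mor B Y)
          (i1 : Mor X B) (i2 : Mor Y B), is_biproduct p1 p2 i1 i2,
      forall (X Y : Obj A) (f : Mor X Y), exists K (k : Mor K X), is_kernel f k,
      forall (X Y : Obj A) (f : Mor X Y), exists C (c : Mor Y C), is_cokernel f c,
      forall (X Y : Obj A) (m : Mor X Y), monic m ->
          exists Z (f : Mor Y Z), is_kernel f m
    & forall (X Y : Obj A) (e : Mor X Y), epic e ->
          exists Z (f : Mor Z X), is_cokernel f e].

Definition short_exact (F M C : Obj A) (i : Mor F M) (d : Mor M C) :=
  is_kernel d i /\ is_cokernel i d.

Definition self_F_split (strong : bool) (F M : Obj A) (i : Mor F M) :=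
  forall (g : Mor M M) (P : Obj A) (j : Mor P M) (f : Mor P F),
    is_pullback i g j f -> section_s strong j.
Definition dual_self_F_split (strong : bool) (M C : Obj A) (d : Mor M C) :=
  forall (g : Mor M M) (Q : Obj A) (p : Mor M Q) (h : Mor C Q),
    is_pushout d g p h -> retraction_s strong p.

Definition self_Rickart (strong : bool) (M : Obj A) :=
  forall (f : Mor M M) (K : Obj A) (k : Mor K M), is_kernel f k -> section_s strong k.
Definition dual_self_Rickart (strong : bool) (M : Obj A) :=
  forall (f : Mor M M) (C : Obj A) (c : Mor M C), is_cokernel f c -> retraction_s strong c.

End Defs.

Arguments abelian : clear implicits.

(* The pullback of [i] along [g] is a kernel of [d g], and the pushout of [d]
   along [g] is a cokernel of [g i].  For [g = 1] the pullback is [i] itself,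
   so self-F-splitness makes [i] a section and the sequence splits; a kernel
   [k] of [g] factors as [k = j l] through the pullback, so [k] is a
   (fully invariant) section as soon as [j] and [l] are.  Conversely, a
   splitting provides a monomorphism [m : C -> M], and the kernel of [d g] is
   then the kernel of the endomorphism [m d g] of [M], hence a section when
   [M] is self-Rickart; [l] is a section because [j l] is one. *)
From Pilot Require Import Defs.
From HB Require Import structures.
From mathcomp Require Import all_boot all_algebra.
Local Open Scope ring_scope.

Set Implicit Arguments. Unset Strict Implicit.
Import GRing.Theory.

Section Preadditive.
Variable A : preadditive.
Local Notation "g \oc f" := (cmp g f) (at level 40, left associativity).

Definition has_kernels :=
  forall (X Y : Obj A) (f : Mor X Y), exists K (k : Mor K X), is_kernel f k.
Definition has_cokernels :=
  forall (X Y : Obj A) (f : Mor X Y), exists K (c : Mor Y K), is_cokernel f c.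

Lemma cmp0l (X Y Z : Obj A) (f : Mor X Y) : (0 : Mor Y Z) \oc f = 0.
Proof. by apply: (addIr (0 \oc f)); rewrite -comp_addl !add0r. Qed.

Lemma cmp0r (X Y Z : Obj A) (g : Mor Y Z) : g \oc (0 : Mor X Y) = 0.
Proof. by apply: (addIr (g \oc 0)); rewrite -comp_addr !add0r. Qed.

Lemma cmpBl (X Y Z : Obj A) (g g' : Mor Y Z) (f : Mor X Y) :
  (g - g') \oc f = g \oc f - g' \oc f.
Proof. by apply: (addIr (g' \oc f)); rewrite -comp_addl !subrK. Qed.

Lemma cmpBr (X Y Z : Obj A) (g : Mor Y Z) (f f' : Mor X Y) :
  g \oc (f - f') = g \oc f - g \oc f'.
Proof. by apply: (addIr (g \oc f')); rewrite -comp_addr !subrK. Qed.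

Lemma section_monic (X Y : Obj A) (s : Mor X Y) : is_section s -> Defs.monic s.
Proof.
move=> [t Ht] Z x y Hxy.
by rewrite -(comp_idl x) -(comp_idl y) -Ht -!comp_assoc Hxy.
Qed.

Lemma retraction_epic (X Y : Obj A) (s : Mor X Y) : is_retraction s -> epic s.
Proof.
move=> [t Ht] Z x y Hxy.
by rewrite -(comp_idr x) -(comp_idr y) -Ht !comp_assoc Hxy.
Qed.

Lemma kernel_monic (X Y K : Obj A) (f : Mor X Y) (k : Mor K X) :
  is_kernel f k -> Defs.monic k.
Proof.
move=> [fk0 univ] Z x y kxy.
have /univ [u [_ uniq_u]] : f \oc (k \oc x) = 0 by rewrite comp_assoc fk0 cmp0l.
by rewrite -(uniq_u x erefl) (uniq_u y (esym kxy)).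
Qed.

Lemma cokernel_epic (X Y K : Obj A) (f : Mor X Y) (c : Mor Y K) :
  is_cokernel f c -> epic c.
Proof.
move=> [cf0 univ] Z x y xcy.
have /univ [u [_ uniq_u]] : (x \oc c) \oc f = 0 by rewrite -comp_assoc cf0 cmp0r.
by rewrite -(uniq_u x erefl) (uniq_u y (esym xcy)).
Qed.

Lemma is_kernel_comp_monic (X Y W K : Obj A) (f : Mor X Y) (m : Mor Y W)
    (k : Mor K X) :
  is_kernel f k -> Defs.monic m -> is_kernel (m \oc f) k.
Proof.
move=> [fk0 univ] mono_m; split; first by rewrite -comp_assoc fk0 cmp0r.
by move=> Z x mfx0; apply: univ; apply: mono_m; rewrite cmp0r comp_assoc.
Qed.

Lemma is_cokernel_comp_epic (X Y W K : Obj A) (f : Mor X Y) (e : Mor W X)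
    (c : Mor Y K) :
  is_cokernel f c -> epic e -> is_cokernel (f \oc e) c.
Proof.
move=> [cf0 univ] epi_e; split; first by rewrite comp_assoc cf0 cmp0l.
by move=> Z x xfe0; apply: univ; apply: epi_e; rewrite cmp0l -comp_assoc.
Qed.

Lemma section_s_comp (st : bool) (X Y Z : Obj A) (a : Mor Y Z) (b : Mor X Y) :
  section_s st a -> section_s st b -> section_s st (a \oc b).
Proof.
move=> [[ta Ha] FIa] [[tb Hb] FIb].
have sec_ab : is_section (a \oc b).
  by exists (tb \oc ta); rewrite comp_assoc -(comp_assoc tb) Ha comp_idr.
split=> // strong; have [_ inv_a] := FIa strong; have [_ inv_b] := FIb strong.
split; first exact: section_monic.
move=> h; have [al Hal] := inv_a h; have [be Hbe] := inv_b al.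
by exists be; rewrite comp_assoc Hal -!comp_assoc Hbe.
Qed.

Lemma retraction_s_comp (st : bool) (X Y Z : Obj A) (a : Mor Y Z) (b : Mor X Y) :
  retraction_s st a -> retraction_s st b -> retraction_s st (a \oc b).
Proof.
move=> [[ta Ha] FCa] [[tb Hb] FCb].
have ret_ab : is_retraction (a \oc b).
  by exists (tb \oc ta); rewrite comp_assoc -(comp_assoc a) Hb comp_idr Ha.
split=> // strong; have [_ coinv_a] := FCa strong; have [_ coinv_b] := FCb strong.
split; first exact: retraction_epic.
move=> h; have [be Hbe] := coinv_b h; have [al Hal] := coinv_a be.
by exists al; rewrite -comp_assoc Hbe !comp_assoc Hal.
Qed.

Lemma section_s_right_factor (st : bool) (M P K : Obj A) (j : Mor P M)
    (l : Mor K P) :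
  section_s st (j \oc l) -> section_s st j -> section_s st l.
Proof.
move=> [[t Ht] FIjl] [[r Hr] _]; split; first by exists (t \oc j); rewrite -comp_assoc.
have mono_j : Defs.monic j by apply: section_monic; exists r.
move=> strong; have [mono_jl inv_jl] := FIjl strong; split.
  by move=> Z x y Hxy; apply: mono_jl; rewrite -!comp_assoc Hxy.
(* An endomorphism [h] of [P] is transported to the endomorphism [j h r] of [M]. *)
move=> h; have [al Hal] := inv_jl (j \oc h \oc r).
exists al; apply: mono_j.
by rewrite (comp_assoc j l al) -Hal -!comp_assoc (comp_assoc r j l) Hr comp_idl.
Qed.

Lemma retraction_s_left_factor (st : bool) (M Q K : Obj A) (q : Mor Q K)
    (p : Mor M Q) :
  retraction_s st (q \oc p) -> retraction_s st p -> retraction_s st q.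
Proof.
move=> [[t Ht] FCqp] [[r Hr] _]; split; first by exists (p \oc t); rewrite comp_assoc.
have epi_p : epic p by apply: retraction_epic; exists r.
move=> strong; have [epi_qp coinv_qp] := FCqp strong; split.
  by move=> Z x y Hxy; apply: epi_qp; rewrite !comp_assoc Hxy.
move=> h; have [be Hbe] := coinv_qp (r \oc h \oc p).
exists be; apply: epi_p.
by rewrite -(comp_assoc be q p) -Hbe !comp_assoc -(comp_assoc q p r) Hr comp_idr.
Qed.

Lemma pullback_idm (X Y : Obj A) (i : Mor X Y) : is_pullback i (idm Y) i (idm X).
Proof.
split; first by rewrite comp_idl comp_idr.
move=> Z x y; rewrite comp_idl => ->; exists y.
by split=> [|u [_]]; rewrite comp_idl.
Qed.

Lemma pushout_idm (X Y : Obj A) (d : Mor X Y) : is_pushout d (idm X) d (idm Y).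
Proof.
split; first by rewrite comp_idl comp_idr.
move=> Z x y; rewrite comp_idr => ->; exists y.
by split=> [|u [_]]; rewrite comp_idr.
Qed.

Lemma biproduct_iso_biproduct (X Y B : Obj A) (p1 : Mor B X) (p2 : Mor B Y)
    (i1 : Mor X B) (i2 : Mor Y B) :
  is_biproduct p1 p2 i1 i2 -> iso_biproduct B X Y.
Proof.
move=> bip; exists B, p1, p2, i1, i2; split=> //.
by exists (idm B), (idm B); rewrite comp_idl.
Qed.

Lemma iso_biproduct_section (M X Y : Obj A) :
  iso_biproduct M X Y -> exists s : Mor Y M, is_section s.
Proof.
move=> [B [p1 [p2 [i1 [i2 [[_ H2 _ _ _] [u [v [_ uv]]]]]]]]].
exists (v \oc i2), (p2 \oc u).
by rewrite comp_assoc -(comp_assoc p2) uv comp_idr.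
Qed.

Lemma iso_biproduct_retraction (M X Y : Obj A) :
  iso_biproduct M X Y -> exists r : Mor M X, is_retraction r.
Proof.
move=> [B [p1 [p2 [i1 [i2 [[H1 _ _ _ _] [u [v [_ uv]]]]]]]]].
exists (p1 \oc u), (v \oc i1).
by rewrite comp_assoc -(comp_assoc p1) uv comp_idr.
Qed.

End Preadditive.

Section ShortExact.
Variables (A : preadditive) (F M C : Obj A) (i : Mor F M) (d : Mor M C).
Hypothesis ses : short_exact i d.
Local Notation "g \oc f" := (cmp g f) (at level 40, left associativity).

Definition ker_factor_section (st : bool) :=
  forall (g : Mor M M) (P : Obj A) (j : Mor P M) (f : Mor P F),
    is_pullback i g j f ->
    forall (K : Obj A) (k : Mor K M), is_kernel g k ->
    forall l : Mor K P, j \oc l = k -> section_s st l.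

Definition coker_factor_retraction (st : bool) :=
  forall (g : Mor M M) (Q : Obj A) (p : Mor M Q) (h : Mor C Q),
    is_pushout d g p h ->
    forall (K : Obj A) (c : Mor M K), is_cokernel g c ->
    forall q : Mor Q K, q \oc p = c -> retraction_s st q.

Lemma ses_pullback_kernel (g : Mor M M) P (j : Mor P M) (f : Mor P F) :
  is_pullback i g j f -> is_kernel (d \oc g) j.
Proof.
have [[di0 univ_i] _] := ses; have mono_i := kernel_monic (conj di0 univ_i).
move=> [sq univ]; split; first by rewrite -comp_assoc sq comp_assoc di0 cmp0l.
move=> Z x; rewrite -comp_assoc => /univ_i [y [iy _]].
have [u [[ju _] uniq_u]] := univ _ x y (esym iy).
exists u; split=> // u' ju'; apply: uniq_u; split=> //.
by apply: mono_i; rewrite comp_assoc -sq -comp_assoc ju' iy.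
Qed.

Lemma ses_kernel_pullback (g : Mor M M) P (j : Mor P M) :
  is_kernel (d \oc g) j -> exists f, is_pullback i g j f.
Proof.
have [[di0 univ_i] _] := ses; have mono_i := kernel_monic (conj di0 univ_i).
move=> [dgj0 univ]; rewrite -comp_assoc in dgj0.
have [f [if_ _]] := univ_i _ _ dgj0.
exists f; split=> // Z x y gxiy.
have /univ [u [ju uniq_u]] : (d \oc g) \oc x = 0.
  by rewrite -comp_assoc gxiy comp_assoc di0 cmp0l.
exists u; split; last by move=> u' [/uniq_u].
by split=> //; apply: mono_i; rewrite comp_assoc if_ -comp_assoc ju.
Qed.

Lemma ses_pushout_cokernel (g : Mor M M) Q (p : Mor M Q) (h : Mor C Q) :
  is_pushout d g p h -> is_cokernel (g \oc i) p.
Proof.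
have [_ [di0 univ_d]] := ses; have epi_d := cokernel_epic (conj di0 univ_d).
move=> [sq univ]; split; first by rewrite comp_assoc sq -comp_assoc di0 cmp0r.
move=> Z x; rewrite comp_assoc => /univ_d [y [yd _]].
have [u [[up _] uniq_u]] := univ _ x y (esym yd).
exists u; split=> // u' u'p; apply: uniq_u; split=> //.
by apply: epi_d; rewrite -comp_assoc -sq comp_assoc u'p yd.
Qed.

Lemma ses_cokernel_pushout (g : Mor M M) Q (p : Mor M Q) :
  is_cokernel (g \oc i) p -> exists h, is_pushout d g p h.
Proof.
have [_ [di0 univ_d]] := ses; have epi_d := cokernel_epic (conj di0 univ_d).
move=> [pgi0 univ]; rewrite comp_assoc in pgi0.
have [h [hd _]] := univ_d _ _ pgi0.
exists h; split=> // Z x y xgyd.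
have /univ [u [up uniq_u]] : x \oc (g \oc i) = 0.
  by rewrite comp_assoc xgyd -comp_assoc di0 cmp0r.
exists u; split; last by move=> u' [/uniq_u].
by split=> //; apply: epi_d; rewrite -comp_assoc hd comp_assoc up.
Qed.

Lemma ses_biproduct_of_section (t : Mor M F) :
  t \oc i = idm F -> iso_biproduct M F C.
Proof.
have [[di0 _] [_ univ_d]] := ses; have epi_d := cokernel_epic (ses.2).
move=> ti1.
have /univ_d [s [sd _]] : (idm M - i \oc t) \oc i = 0.
  by rewrite cmpBl comp_idl -comp_assoc ti1 comp_idr subrr.
apply: (@biproduct_iso_biproduct _ _ _ _ t d i s); split=> //.
- by apply: epi_d; rewrite -comp_assoc sd cmpBr comp_idr comp_assoc di0 cmp0l
    subr0 comp_idl.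
- by apply: epi_d; rewrite -comp_assoc sd cmpBr comp_idr comp_assoc ti1 comp_idl
    subrr cmp0l.
- by rewrite sd addrC subrK.
Qed.

Lemma ses_biproduct_of_retraction (s : Mor C M) :
  d \oc s = idm C -> iso_biproduct M F C.
Proof.
have [[_ univ_i] [di0 _]] := ses; have mono_i := kernel_monic (ses.1).
move=> ds1.
have /univ_i [t [it _]] : d \oc (idm M - s \oc d) = 0.
  by rewrite cmpBr comp_idr comp_assoc ds1 comp_idl subrr.
apply: (@biproduct_iso_biproduct _ _ _ _ t d i s); split=> //.
- by apply: mono_i; rewrite comp_assoc it cmpBl comp_idl -comp_assoc di0 cmp0r
    subr0 comp_idr.
- by apply: mono_i; rewrite comp_assoc it cmpBl comp_idl -comp_assoc ds1 comp_idr
    subrr cmp0r.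
- by rewrite it subrK.
Qed.

Lemma self_F_split_iso_biproduct (st : bool) :
  self_F_split st i -> iso_biproduct M F C.
Proof.
move=> split_i; have [[t ti1] _] := split_i _ _ _ _ (pullback_idm i).
exact: ses_biproduct_of_section ti1.
Qed.

Lemma dual_self_F_split_iso_biproduct (st : bool) :
  dual_self_F_split st d -> iso_biproduct M F C.
Proof.
move=> split_d; have [[s ds1] _] := split_d _ _ _ _ (pushout_idm d).
exact: ses_biproduct_of_retraction ds1.
Qed.

Lemma self_Rickart_of_self_F_split (st : bool) :
  has_kernels A -> self_F_split st i -> ker_factor_section st ->
  self_Rickart st M.
Proof.
move=> kernels split_i factor g K k ker_k.
have [P [j ker_j]] := kernels _ _ (d \oc g).
have [f pb] := ses_kernel_pullback ker_j.
have [l [jl _]] : exists! l : Mor K P, j \oc l = k.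
  by apply: ker_j.2; rewrite -comp_assoc ker_k.1 cmp0r.
rewrite -jl; apply: section_s_comp (split_i _ _ _ _ pb) _.
exact: factor pb _ _ ker_k _ jl.
Qed.

Lemma dual_self_Rickart_of_dual_self_F_split (st : bool) :
  has_cokernels A -> dual_self_F_split st d -> coker_factor_retraction st ->
  dual_self_Rickart st M.
Proof.
move=> cokernels split_d factor g K c coker_c.
have [Q [p coker_p]] := cokernels _ _ (g \oc i).
have [h po] := ses_cokernel_pushout coker_p.
have [q [qp _]] : exists! q : Mor Q K, q \oc p = c.
  by apply: coker_p.2; rewrite comp_assoc coker_c.1 cmp0l.
rewrite -qp; apply: retraction_s_comp _ (split_d _ _ _ _ po).
exact: factor po _ _ coker_c _ qp.
Qed.

Lemma self_F_split_of_self_Rickart (st : bool) :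
  self_Rickart st M -> iso_biproduct M F C -> self_F_split st i.
Proof.
move=> rickart /iso_biproduct_section [m /section_monic mono_m] g P j f pb.
apply: (rickart (m \oc (d \oc g))).
exact: is_kernel_comp_monic (ses_pullback_kernel pb) mono_m.
Qed.

Lemma dual_self_F_split_of_dual_self_Rickart (st : bool) :
  dual_self_Rickart st M -> iso_biproduct M F C -> dual_self_F_split st d.
Proof.
move=> rickart /iso_biproduct_retraction [e /retraction_epic epi_e] g Q p h po.
apply: (rickart ((g \oc i) \oc e)).
exact: is_cokernel_comp_epic (ses_pushout_cokernel po) epi_e.
Qed.

Lemma ker_factor_section_of_self_Rickart (st : bool) :
  self_Rickart st M -> self_F_split st i -> ker_factor_section st.
Proof.
move=> rickart split_i g P j f pb K k ker_k l jl.
apply: section_s_right_factor (split_i _ _ _ _ pb).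
by rewrite jl; apply: rickart ker_k.
Qed.

Lemma coker_factor_retraction_of_dual_self_Rickart (st : bool) :
  dual_self_Rickart st M -> dual_self_F_split st d -> coker_factor_retraction st.
Proof.
move=> rickart split_d g Q p h po K c coker_c q qp.
apply: retraction_s_left_factor (split_d _ _ _ _ po).
by rewrite qp; apply: rickart coker_c.
Qed.

Lemma self_F_split_iff (st : bool) : has_kernels A ->
  (self_F_split st i /\ ker_factor_section st) <->
  (self_Rickart st M /\ iso_biproduct M F C).
Proof.
move=> kernels; split=> [[split_i factor] | [rickart iso]].
  split; first exact: self_Rickart_of_self_F_split.
  exact: self_F_split_iso_biproduct split_i.
have split_i := self_F_split_of_self_Rickart rickart iso.
by split=> //; apply: ker_factor_section_of_self_Rickart.
Qed.

Lemma dual_self_F_split_iff (st : bool) : has_cokernels A ->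
  (dual_self_F_split st d /\ coker_factor_retraction st) <->
  (dual_self_Rickart st M /\ iso_biproduct M F C).
Proof.
move=> cokernels; split=> [[split_d factor] | [rickart iso]].
  split; first exact: dual_self_Rickart_of_dual_self_F_split.
  exact: dual_self_F_split_iso_biproduct split_d.
have split_d := dual_self_F_split_of_dual_self_Rickart rickart iso.
by split=> //; apply: coker_factor_retraction_of_dual_self_Rickart.
Qed.

End ShortExact.

Theorem theorem4p12 (A : preadditive) (HA : abelian A) (strong : bool)
    (F M C : Obj A) (i : Mor F M) (d : Mor M C)
    (Hses : short_exact i d) (Hfi : fully_invariant i) :
  ( (self_F_split strong i /\
       forall (g : Mor M M) (P : Obj A) (j : Mor P M) (f : Mor P F),
         is_pullback i g j f ->
         forall (K : Obj A) (k : Mor K M), is_kernel g k ->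
         forall l : Mor K P, cmp j l = k -> section_s strong l)
    <-> (self_Rickart strong M /\ iso_biproduct M F C) )
  /\
  ( (dual_self_F_split strong d /\
       forall (g : Mor M M) (Q : Obj A) (p : Mor M Q) (h : Mor C Q),
         is_pushout d g p h ->
         forall (K : Obj A) (c : Mor M K), is_cokernel g c ->
         forall q : Mor Q K, cmp q p = c -> retraction_s strong q)
    <-> (dual_self_Rickart strong M /\ iso_biproduct M F C) ).
Proof.
have [_ [_ kernels cokernels _ _]] := HA.
split; [exact: self_F_split_iff Hses strong kernels |
        exact: dual_self_F_split_iff Hses strong cokernels].
Qed.
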